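(* Let $G$ be a finite simple unmixed graph with vertex set $V(G)=\{t_1,\ldots,t_s\}$, let $C_1,\ldots,C_r$ be the minimal vertex covers of $G$, let $J=I_c(G)$, and let $\mathcal{G}_J$ be the graph of $J$. Then: (a) $\{C_i,C_j\}$ is an edge of $\mathcal{G}_J$ if and only if there exists an edge $\{t_k,t_\ell\}\in E(G)$ such that $t_k\in C_i$, $t_\ell\notin C_i$ and $(C_i\setminus\{t_k\})\cup\{t_\ell\}=C_j$. In particular, every non-isolated vertex of $\mathcal{G}_J$ (viewed as a vertex cover of $G$) has the exchange property. (b) $\mathcal{G}_J$ is not a discrete graph (i.e. it has at least one edge) if and only if ${\rm v}(I_c(G))=\alpha_0(G)-1$. (c) If $I_c(G)$ is linearly presented, then all minimal vertex covers of $G$ have the exchange property and ${\rm v}(I_c(G))=\alpha_0(G)-1$.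
   Context: $S=K[t_1,\ldots,t_s]$ is a polynomial ring over a field $K$ with the standard grading. A vertex cover of $G$ is a subset of $V(G)$ meeting every edge; a minimal vertex cover is an inclusion-minimal one; $\alpha_0(G)$ is the minimum size of a vertex cover. $G$ is unmixed if all minimal vertex covers have the same cardinality. The ideal of covers $I_c(G)\subset S$ is generated by the monomials $\prod_{t_i\in C}t_i$, $C$ a minimal vertex cover of $G$. A vertex cover $C$ has the exchange property if there is an edge $\{t_k,t_\ell\}$ with $t_k\in C$, $t_\ell\notin C$ and $(C\setminus\{t_k\})\cup\{t_\ell\}$ a vertex cover of $G$. For unmixed $G$, the graph $\mathcal{G}_J$ of $J=I_c(G)$ has vertex set $\{C_1,\ldots,C_r\}$, and $\{C_i,C_j\}$ ($i\ne j$) is an edge iff $|C_i\cup C_j|=|C_i|+1$. For a graded ideal $I\subset S$, the v-number is ${\rm v}(I)=\min\{d\ge 0: \exists f\in S_d,\ \exists \mathfrak p\in{\rm Ass}(I)\text{ with }(I\colon f)=\mathfrak p\}$. An ideal minimally generated by monomials $u_1,\ldots,u_r$ is linearly presented if all $u_i$ have the same degree and the kernel of $S^r\to S$, $e_i\mapsto u_i$, is generated by vectors whose entries are linear forms. *)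

From HB Require Import structures.
From mathcomp Require Import all_boot all_order all_algebra.
From mathcomp Require Import mpoly.
Set Implicit Arguments. Unset Strict Implicit. Unset Printing Implicit Defensive.
Import GRing.Theory.
Local Open Scope ring_scope.

(* Graph G on vertex set {t_1..t_s} = 'I_s, given by a relation e
   (assumed symmetric and irreflexive in the theorem). *)
Section Graph.
Variables (s : nat) (e : rel 'I_s).

Definition vcover (C : {set 'I_s}) : bool :=
  [forall k, forall l, e k l ==> (k \in C) || (l \in C)].

Definition minvcover (C : {set 'I_s}) : bool := minset vcover C.

(* alpha_0(G): minimum size of a vertex cover (setT is always a cover). *)
Definition alpha0 : nat := \big[minn/s]_(C : {set 'I_s} | vcover C) #|C|.

Definition unmixed : Prop :=
  forall C D, minvcover C -> minvcover D -> #|C| = #|D|.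

Definition exchange (C : {set 'I_s}) : Prop :=
  exists k l, [/\ e k l, k \in C, l \notin C & vcover ((C :\ k) :|: [set l])].

Definition GJ_edge (C D : {set 'I_s}) : bool :=
  [&& minvcover C, minvcover D, C != D & #|C :|: D| == #|C|.+1].

End Graph.

Section Alg.
Variables (K : fieldType) (s : nat).
Local Notation S := {mpoly K[s]}.

Definition ideal_gen (gs : seq S) : S -> Prop :=
  fun p => exists c : 'I_(size gs) -> S, p = \sum_(i < size gs) c i * gs`_i.

Definition colon (I : S -> Prop) (f : S) : S -> Prop := fun g => I (g * f).

Definition is_ideal (P : S -> Prop) : Prop :=
  [/\ P 0, (forall a b, P a -> P b -> P (a + b)) & (forall r a, P a -> P (r * a))].

Definition prime_ideal (P : S -> Prop) : Prop :=
  [/\ is_ideal P, ~ P 1 & forall a b, P (a * b) -> P a \/ P b].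

Definition same_ideal (P Q : S -> Prop) : Prop := forall p, P p <-> Q p.

Definition Ass (I : S -> Prop) (P : S -> Prop) : Prop :=
  prime_ideal P /\ exists g : S, same_ideal (colon I g) P.

Definition vwitness (I : S -> Prop) (d : nat) : Prop :=
  exists f : S, f \is d.-homog /\ exists P, Ass I P /\ same_ideal (colon I f) P.

Definition is_vnumber (I : S -> Prop) (d : nat) : Prop :=
  vwitness I d /\ forall d', vwitness I d' -> (d <= d')%N.

(* linearly presented, for a given (minimal) monomial generating list gs *)
Definition syzygy (gs : seq S) (w : 'I_(size gs) -> S) : Prop :=
  \sum_(i < size gs) w i * gs`_i = 0.

Definition linear_vec (gs : seq S) (w : 'I_(size gs) -> S) : Prop :=
  forall i, w i \is 1.-homog.

Definition linearly_presented (gs : seq S) : Prop :=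
  (exists d, forall i : 'I_(size gs), gs`_i \is d.-homog) /\
  forall w, syzygy w ->
    exists (n : nat) (h : 'I_n -> S) (L : 'I_n -> 'I_(size gs) -> S),
      (forall k, syzygy (L k) /\ linear_vec (L k)) /\
      forall i, w i = \sum_(k < n) h k * L k i.

End Alg.

Definition cover_monomial (K : fieldType) (s : nat) (C : {set 'I_s}) : {mpoly K[s]} :=
  \prod_(i in C) 'X_i.

Definition Ic_gens (K : fieldType) (s : nat) (e : rel 'I_s) : seq {mpoly K[s]} :=
  [seq cover_monomial K C | C <- enum [set C : {set 'I_s} | minvcover e C]].

Definition Ic (K : fieldType) (s : nat) (e : rel 'I_s) : {mpoly K[s]} -> Prop :=
  ideal_gen (Ic_gens K e).
Arguments Ic_gens K {s} e.
Arguments Ic K {s} e.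
Arguments cover_monomial K {s} C.

From HB Require Import structures.
From mathcomp Require Import all_boot all_order all_algebra.
From mathcomp Require Import mpoly.
From mathcomp Require Import zify.
Set Implicit Arguments. Unset Strict Implicit. Unset Printing Implicit Defensive.
Import GRing.Theory.
Local Open Scope ring_scope.

(* Since every vertex of a minimal vertex cover has a neighbour outside it, two
   minimal covers of an unmixed graph are adjacent in G_J exactly when one is
   obtained from the other by swapping the endpoints of an edge.
   If (J : f) = p is an associated prime of J = I_c(G), then p contains t_a and
   t_b for some edge {a, b}: otherwise the vertices whose variable is not in p
   would contain a minimal cover C, and t^C in J would force some t_i, i in C,
   into p. Hence t_a f lies in J and deg f >= alpha_0 - 1; in case of equality the
   covers dividing t_a f and t_b f are adjacent in G_J. Conversely, for adjacent
   C and (C \ k) u {l}, the colon ideal (J : t^(C \ k)) is the prime (t_k, t_l).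
   Finally, a linear syzygy of the generators vanishes at an isolated cover C,
   whereas the syzygy t^D e_C - t^C e_D does not; so if J is linearly presented,
   G_J has no isolated vertex. *)

Lemma geq_bigmin (I : eqType) (r : seq I) (P : pred I) (F : I -> nat) x0 j :
  j \in r -> P j -> (\big[minn/x0]_(i <- r | P i) F i <= F j)%N.
Proof.
elim: r => [|x r IHr] //; rewrite inE big_cons => /orP [/eqP <- -> | jr Pj].
  exact: geq_minl.
by case: ifP => _; rewrite ?geq_min IHr ?orbT.
Qed.

Lemma swap_of_cardU (T : finType) (C D : {set T}) :
  #|C| = #|D| -> #|C :|: D| = #|C|.+1 ->
  exists k l, [/\ k \in C, l \notin C & (C :\ k) :|: [set l] = D].
Proof.
move=> CD CUD; have := cardsUI C D; have := cardsID D C; have := cardsID C D.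
rewrite [D :&: C]setIC => cardC cardD cardUI.
have /cards1P [k Ck] : #|C :\: D| == 1%N by apply/eqP; lia.
have /cards1P [l Dl] : #|D :\: C| == 1%N by apply/eqP; lia.
have /setP CkE := Ck; have /setP DlE := Dl.
move: (CkE k) (DlE l); rewrite !inE !eqxx => /andP [kD kC] /andP [lC lD].
exists k, l; split=> //; apply/setP => x; move: (CkE x) (DlE x); rewrite !inE.
by case: (x \in C); case: (x \in D); case: (x == k); case: (x == l).
Qed.

Section VertexCovers.
Variables (s : nat) (e : rel 'I_s).
Hypotheses (esym : ssrbool.symmetric e) (eirr : irreflexive e) (hunm : unmixed e).
Implicit Types C D : {set 'I_s}.

Lemma vcoverP C : reflect (forall k l, e k l -> k \in C \/ l \in C) (vcover e C).
Proof.
apply: (iffP forallP) => [Ccov k l kl | Ccov k].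
  by move/forallP/(_ l)/implyP/(_ kl)/orP: (Ccov k).
by apply/forallP => l; apply/implyP => /Ccov /orP.
Qed.

Lemma vcoverPn C : ~~ vcover e C -> exists k l, [/\ e k l, k \notin C & l \notin C].
Proof.
move=> Cncov.
have [/existsP [k /existsP [l /and3P [kl kC lC]]] | none] :=
  boolP [exists k, exists l, [&& e k l, k \notin C & l \notin C]]; first by exists k, l.
case/negP: Cncov; apply/forallP => k; apply/forallP => l; apply/implyP => kl.
apply: contraR none => /norP [kC lC].
by apply/existsP; exists k; apply/existsP; exists l; rewrite kl kC lC.
Qed.

Lemma vcoverT : vcover e setT.
Proof. by apply/vcoverP => k l _; left; rewrite inE. Qed.

Lemma minvcover_exists : exists C, minvcover e C.
Proof. by have [C minC _] := minset_exists vcoverT; exists C. Qed.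

Lemma minvcover_nbr C k : minvcover e C -> k \in C -> exists l, e k l /\ l \notin C.
Proof.
move=> /minsetP [Ccov Cmin] kC.
have /vcoverPn [a [b [ab aNCk bNCk]]] : ~~ vcover e (C :\ k).
  apply/negP => /Cmin /(_ (subD1set C k)) CkC.
  by move/setP/(_ k): CkC; rewrite !inE eqxx kC.
have endpoint x : x \notin C :\ k -> x \in C -> x = k.
  by rewrite !inE negb_and negbK => /orP [/eqP // | /negP].
have [aC | bC] := vcoverP _ Ccov a b ab.
  rewrite -(endpoint a aNCk aC); exists b; split => //.
  by apply/negP => bC; move: ab; rewrite (endpoint a aNCk aC) (endpoint b bNCk bC) eirr.
rewrite -(endpoint b bNCk bC); exists a; split; first by rewrite esym.
by apply/negP => aC; move: ab; rewrite (endpoint a aNCk aC) (endpoint b bNCk bC) eirr.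
Qed.

Lemma alpha0_le C : vcover e C -> (alpha0 e <= #|C|)%N.
Proof. by move=> Ccov; rewrite geq_bigmin ?mem_index_enum. Qed.

Lemma alpha0_attained : exists2 C, vcover e C & #|C| = alpha0 e.
Proof.
rewrite /alpha0; apply: (big_ind (fun x => exists2 C, vcover e C & #|C| = x)).
- by exists setT; rewrite ?vcoverT // cardsT card_ord.
- by move=> x y [C ? <-] [D ? <-]; rewrite /minn; case: ifP => _; [exists C | exists D].
- by move=> C Ccov; exists C.
Qed.

Lemma card_minvcover C : minvcover e C -> #|C| = alpha0 e.
Proof.
move=> minC; have [C0 C0cov C0card] := alpha0_attained.
have [C1 minC1 C1sub] := minset_exists C0cov.
rewrite (hunm minC minC1); apply/eqP; rewrite eqn_leq alpha0_le ?(minsetp minC1) //.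
by rewrite -C0card subset_leq_card.
Qed.

Lemma alpha0_gt0 : (exists k l, e k l) -> (0 < alpha0 e)%N.
Proof.
move=> [k [l kl]]; have [C Ccov <-] := alpha0_attained; apply/card_gt0P.
by have [kC | lC] := vcoverP _ Ccov k l kl; [exists k | exists l].
Qed.

Lemma GJ_edge_of_subset C D j :
  minvcover e C -> minvcover e D -> C != D -> D \subset j |: C -> GJ_edge e C D.
Proof.
move=> minC minD CD DjC; rewrite /GJ_edge minC minD CD eqn_leq /=.
have DnC : ~~ (D \subset C).
  by apply: contra CD => DC; rewrite eq_sym eqEcard DC (hunm minC minD) leqnn.
rewrite proper_card ?properUl // andbT.
apply: leq_trans (leq_add (leq_b1 (j \notin C)) (leqnn #|C|)).
by rewrite -cardsU1 subset_leq_card // subUset subsetU1.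
Qed.

Lemma GJ_edgeP C D : minvcover e C -> minvcover e D ->
  GJ_edge e C D <-> exists k l, [/\ e k l, k \in C, l \notin C & (C :\ k) :|: [set l] = D].
Proof.
move=> minC minD; split=> [/and4P [_ _ _ /eqP CUD] | [k [l [_ kC lC DE]]]]; last first.
  apply: (GJ_edge_of_subset (j := l) minC minD).
    by apply/eqP => CD; move: lC; rewrite CD -DE !inE eqxx orbT.
  by apply/subsetP => x; rewrite -DE !inE => /orP [/andP [_ ->] | ->]; rewrite ?orbT.
have [k [l [kC lC DE]]] := swap_of_cardU (hunm minC minD) CUD.
have [y [ky yC]] := minvcover_nbr minC kC.
have yD : y \in D.
  have [kD | //] := vcoverP _ (minsetp minD) k y ky.
  by move: kD; rewrite -DE !inE eqxx /= => /eqP lk; move: lC; rewrite -lk kC.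
have yl : y = l by move: yD; rewrite -DE !inE (negbTE yC) andbF => /eqP.
by exists k, l; split=> //; rewrite -yl.
Qed.

Lemma minvcover_neq C : (exists k l, e k l) -> exists2 D, minvcover e D & D != C.
Proof.
move=> [k [l kl]].
have avoid_cov x : vcover e [set~ x].
  apply/vcoverP => a b ab; rewrite !inE; case: (a =P x) => [ax | /eqP]; [right | by left].
  by apply/eqP => bx; move: ab; rewrite ax bx eirr.
have [Dk minDk /subsetP Dk_k] := minset_exists (avoid_cov k).
have [Dl minDl /subsetP Dl_l] := minset_exists (avoid_cov l).
have lDk : l \in Dk.
  have [kDk | //] := vcoverP _ (minsetp minDk) k l kl.
  by move: (Dk_k k kDk); rewrite !inE eqxx.
have [DkC | DkC] := eqVneq Dk C; last by exists Dk.
exists Dl => //; apply: contraTneq lDk => DlC; rewrite DkC -DlC.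
by apply/negP => /Dl_l; rewrite !inE eqxx.
Qed.

Lemma GJ_edge_exchange C D : minvcover e C -> GJ_edge e C D -> exchange e C.
Proof.
move=> minC CD; have minD : minvcover e D by case/and4P: CD.
have [k [l [kl kC lC DE]]] := (GJ_edgeP minC minD).1 CD.
by exists k, l; split=> //; rewrite DE; apply: minsetp.
Qed.

End VertexCovers.

Lemma mcoeffMX_le (R : ringType) n (p : {mpoly R[n]}) (m k : 'X_{1..n}) :
  (p * 'X_[m])@_k = if (m <= k)%MM then p@_(k - m)%MM else 0.
Proof.
case: ifP => hle; first by rewrite -{1}(submK hle) addmC mcoeffMX.
apply/eqP; rewrite mcoeff_eq0 (perm_mem (msuppMX p m)); apply/mapP => -[m' _ hk].
by move: hle; rewrite hk lem_addr.
Qed.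

Lemma lem_mdeg_eq n (m1 m2 : 'X_{1..n}) :
  (m1 <= m2)%MM -> (mdeg m2 <= mdeg m1)%N -> m1 = m2.
Proof.
move=> h; rewrite -(submK h) mdegD -[X in (_ <= X)%N]add0n leq_add2r leqn0 mdeg_eq0.
by move=> /eqP ->; rewrite add0m.
Qed.

Section Ideals.
Variables (K : fieldType) (n : nat).
Local Notation S := {mpoly K[n]}.
Implicit Types (p q : S) (V : {set 'I_n}) (m : 'X_{1..n}).

Lemma ideal_gen_is_ideal (gs : seq S) : is_ideal (ideal_gen gs).
Proof.
split.
- by exists (fun _ => 0); rewrite big1 // => i _; rewrite mul0r.
- move=> a b [ca ->] [cb ->]; exists (fun i => ca i + cb i).
  by rewrite -big_split /=; apply: eq_bigr => i _; rewrite mulrDl.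
- move=> r a [ca ->]; exists (fun i => r * ca i).
  by rewrite mulr_sumr; apply: eq_bigr => i _; rewrite mulrA.
Qed.

Lemma ideal_gen_mem (gs : seq S) (i : 'I_(size gs)) r : ideal_gen gs (r * gs`_i).
Proof.
exists (fun j => if j == i then r else 0).
by rewrite (bigD1 i) //= eqxx big1 ?addr0 // => j /negbTE ->; rewrite mul0r.
Qed.

Lemma ideal_sum (P : S -> Prop) (I : Type) (r : seq I) (F : I -> S) :
  is_ideal P -> (forall i, P (F i)) -> P (\sum_(i <- r) F i).
Proof.
move=> [P0 PD _] PF; elim: r => [|x r IHr]; first by rewrite big_nil.
by rewrite big_cons; apply: PD.
Qed.

Lemma ideal_mulr (P : S -> Prop) p q : is_ideal P -> P p -> P (p * q).
Proof. by move=> [_ _ PM] /(PM q); rewrite mulrC. Qed.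

Lemma prime_ideal_prod (P : S -> Prop) (I : eqType) (r : seq I) (F : I -> S) :
  prime_ideal P -> P (\prod_(i <- r) F i) -> exists2 i, i \in r & P (F i).
Proof.
move=> [_ notP1 PM]; elim: r => [|x r IHr]; first by rewrite big_nil => /notP1.
rewrite big_cons => /PM [Px | /IHr [i ri Pi]].
  by exists x; rewrite ?mem_head.
by exists i; rewrite // inE ri orbT.
Qed.

Lemma kernel_prime_ideal (R : idomainType) (f : {rmorphism S -> R}) :
  prime_ideal (fun p => f p = 0).
Proof.
split.
- split=> [|a b fa fb|r a fa]; first exact: rmorph0.
  + by rewrite rmorphD fa fb addr0.
  + by rewrite rmorphM fa mulr0.
- by rewrite rmorph1; apply/eqP; exact: oner_neq0.
- by move=> a b /eqP; rewrite rmorphM mulf_eq0 => /orP [] /eqP; [left | right].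
Qed.

Definition avoids (V : {set 'I_n}) (m : 'X_{1..n}) := [forall i in V, m i == 0%N].

(* [var_ideal V] is the ideal (t_i : i in V), presented as the kernel of the
   substitution t_i := 0 for i in V. *)
Definition kill_vars (V : {set 'I_n}) : S -> S :=
  mmap (@mpolyC n K) (fun i => if i \in V then 0 else 'X_i).

Definition var_ideal (V : {set 'I_n}) : S -> Prop := fun p => kill_vars V p = 0.

Lemma kill_varsE V p :
  kill_vars V p = \sum_(m <- msupp p | avoids V m) p@_m *: 'X_[m].
Proof.
rewrite /kill_vars /mmap [RHS]big_mkcond /=; apply: eq_bigr => m _.
rewrite /mmap1; case: ifPn => [/forall_inP Vm0 | /forall_inPn [i Vi mi]].
  rewrite mpolyXE_id mul_mpolyC; congr (_ *: _); apply: eq_bigr => i _.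
  by case: ifP => // /Vm0 /eqP ->; rewrite !expr0.
by rewrite (bigD1 i) //= Vi expr0n (negbTE mi) mul0r mulr0.
Qed.

Lemma mcoeff_kill_vars V p m :
  (kill_vars V p)@_m = if avoids V m then p@_m else 0.
Proof.
rewrite kill_varsE raddf_sum big_mkcond /=.
have coefX0 m' : avoids V m' != avoids V m -> (p@_m' *: 'X_[m'])@_m = 0.
  by move=> Vmm; rewrite mcoeffZ mcoeffX; case: (m' =P m) Vmm => [-> | _]; rewrite ?eqxx ?mulr0.
case: ifP => Vm.
  rewrite [in RHS](mpolyE p) raddf_sum; apply: eq_bigr => m' _.
  by case: ifPn => // Vm'; apply/esym/coefX0; rewrite Vm (negbTE Vm').
by apply: big1 => m' _; case: ifP => Vm'; rewrite ?coefX0 ?Vm ?Vm'.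
Qed.

Lemma var_idealE V p : var_ideal V p <-> forall m, avoids V m -> p@_m = 0.
Proof.
split=> [Vp m Vm | p0]; first by have := mcoeff_kill_vars V p m; rewrite Vm Vp mcoeff0.
by apply/mpolyP => m; rewrite mcoeff_kill_vars mcoeff0; case: ifP => // /p0.
Qed.

Lemma var_ideal_prime V : prime_ideal (var_ideal V).
Proof. exact: (kernel_prime_ideal (mmap (@mpolyC n K) _)). Qed.

End Ideals.

Section CoverIdeal.
Variables (K : fieldType) (s : nat) (e : rel 'I_s).
Local Notation S := {mpoly K[s]}.
Local Notation gs := (Ic_gens K e).
Local Notation J := (Ic K e).
Implicit Types (C D : {set 'I_s}) (m : 'X_{1..s}) (p : S) (i : 'I_(size gs)).

Definition cover_mnm C : 'X_{1..s} := [multinom ((j \in C) : nat) | j < s].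

Lemma cover_mnmE C (j : 'I_s) : cover_mnm C j = (j \in C).
Proof. by rewrite mnmE. Qed.

Lemma cover_monomialE C : cover_monomial K C = 'X_[cover_mnm C].
Proof.
rewrite /cover_monomial mpolyXE_id big_mkcond /=; apply: eq_bigr => j _.
by rewrite cover_mnmE; case: (j \in C); rewrite ?expr1 ?expr0.
Qed.

Lemma mdeg_cover_mnm C : mdeg (cover_mnm C) = #|C|.
Proof.
rewrite mdegE -sum1_card [RHS]big_mkcond /=; apply: eq_bigr => j _.
by rewrite cover_mnmE; case: (j \in C).
Qed.

Lemma cover_mnm_leP C m : reflect {in C, forall j, 0 < m j}%N (cover_mnm C <= m)%MM.
Proof.
apply: (iffP mnm_lepP) => Cm j; first by move=> jC; have := Cm j; rewrite cover_mnmE jC.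
by rewrite cover_mnmE; case: (boolP (j \in C)) => // /Cm.
Qed.

Definition gen_cover (i : 'I_(size gs)) : {set 'I_s} :=
  nth set0 (enum [set C | minvcover e C]) i.

Lemma size_Ic_gens : size gs = #|[set C | minvcover e C]|.
Proof. by rewrite size_map cardE. Qed.

Lemma gen_cover_min i : minvcover e (gen_cover i).
Proof.
have : (i < size (enum [set C | minvcover e C]))%N by rewrite -cardE -size_Ic_gens.
by move/(mem_nth set0); rewrite mem_enum inE.
Qed.

Lemma nth_Ic_gens i : gs`_i = 'X_[cover_mnm (gen_cover i)].
Proof. by rewrite (nth_map set0) ?cover_monomialE // -cardE -size_Ic_gens. Qed.

Lemma gen_cover_inj : injective gen_cover.
Proof.
have lt_i i : (i < size (enum [set C | minvcover e C]))%N by rewrite -cardE -size_Ic_gens.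
move=> i j ij; apply: val_inj; apply/eqP.
by rewrite -(nth_uniq set0 (lt_i i) (lt_i j) (enum_uniq _)); apply/eqP.
Qed.

Lemma gen_coverP C : minvcover e C -> exists i, gen_cover i = C.
Proof.
move=> minC; have Cmin : C \in enum [set C | minvcover e C] by rewrite mem_enum inE.
have iC : (index C (enum [set C | minvcover e C]) < size gs)%N.
  by rewrite size_Ic_gens cardE index_mem.
by exists (Ordinal iC); rewrite /gen_cover nth_index.
Qed.

Definition cover_dvd m := [exists C, minvcover e C && (cover_mnm C <= m)%MM].

Lemma IcP p : reflect (J p) (all cover_dvd (msupp p)).
Proof.
apply: (iffP allP) => [Jsupp | [c ->] m]; last first.
  rewrite mcoeff_msupp; apply: contraNT => Nm.
  rewrite raddf_sum /=; apply/eqP; apply: big1 => i _.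
  rewrite nth_Ic_gens mcoeffMX_le; case: ifP => // im.
  by case/existsP: Nm; exists (gen_cover i); rewrite gen_cover_min im.
rewrite (mpolyE p); apply: ideal_sum => [|m]; first exact: ideal_gen_is_ideal.
have [/Jsupp /existsP [C /andP [minC Cm]] | /memN_msupp_eq0 ->] := boolP (m \in msupp p).
  have [i iC] := gen_coverP minC.
  rewrite -[X in 'X_[X]](submK Cm) mpolyXD scalerAl -iC -nth_Ic_gens.
  exact: ideal_gen_mem.
by rewrite scale0r; case: (ideal_gen_is_ideal gs).
Qed.

Lemma Ic_cover C : minvcover e C -> J 'X_[cover_mnm C].
Proof.
move=> minC; have [i <-] := gen_coverP minC.
by rewrite -nth_Ic_gens -[gs`_i]mul1r; apply: ideal_gen_mem.
Qed.

Lemma Ic_mulXP p M : J (p * 'X_[M]) <-> {in msupp p, forall m, cover_dvd (M + m)%MM}.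
Proof.
split=> [/IcP/allP JpM m pm | JpM].
  by apply: JpM; rewrite mcoeff_msupp mcoeffMX -mcoeff_msupp.
by apply/IcP/allP => m; rewrite (perm_mem (msuppMX p M)) => /mapP [m' /JpM ? ->].
Qed.

End CoverIdeal.

Section VNumber.
Variables (K : fieldType) (s : nat) (e : rel 'I_s).
Hypotheses (esym : ssrbool.symmetric e) (eirr : irreflexive e) (hunm : unmixed e)
  (hedge : exists k l, e k l).
Local Notation S := {mpoly K[s]}.
Local Notation J := (Ic K e).
Implicit Types (C D : {set 'I_s}) (m : 'X_{1..s}) (p : S).

Lemma vwitness_edge d : vwitness J d -> exists a b (f : S),
  [/\ e a b, f != 0, f \is d.-homog, J ('X_a * f) & J ('X_b * f)].
Proof.
case=> f [fd [P [[Pprime _] JfP]]].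
have Jf : ~ J f by case: Pprime => _ NP1 _ Jf; apply/NP1/JfP; rewrite /colon mul1r.
have f0 : f != 0 by apply: contra_notN Jf => /eqP ->; case: (ideal_gen_is_ideal (Ic_gens K e)).
pose JX i := all (cover_dvd e) (msupp ('X_i * f)).
have PX i : P 'X_i <-> JX i by split=> [/JfP/IcP | /IcP/JfP].
have [/existsP [a /existsP [b /and3P [ab Ja Jb]]] | none] :=
  boolP [exists a, exists b, [&& e a b, JX a & JX b]].
  by exists a, b, f; split=> //; apply/IcP.
have Wcov : vcover e [set i | ~~ JX i].
  apply/forallP => k; apply/forallP => l; apply/implyP => kl; rewrite !inE -negb_and.
  apply: contra none => /andP [Jk Jl].
  by apply/existsP; exists k; apply/existsP; exists l; rewrite kl Jk Jl.
have [C minC /subsetP CW] := minset_exists Wcov.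
have : P (\prod_(i <- enum C) 'X_i).
  apply/JfP/(ideal_mulr _ (ideal_gen_is_ideal _)); rewrite big_enum.
  by have := Ic_cover K minC; rewrite -cover_monomialE.
case/(prime_ideal_prod Pprime) => i; rewrite mem_enum => /CW.
by rewrite inE => /negP NJi /PX.
Qed.

Lemma cover_dvd_mulX a p m : J ('X_a * p) -> m \in msupp p -> cover_dvd e (U_(a) + m)%MM.
Proof. by rewrite mulrC => /Ic_mulXP; apply. Qed.

Lemma vwitness_ge d : vwitness J d -> (alpha0 e <= d.+1)%N.
Proof.
case/vwitness_edge => a [b [f [_ f0 fd Ja _]]]; have fm := mlead_supp f0.
have /existsP [C /andP [minC /lem_leo/lemc_mdeg]] := cover_dvd_mulX Ja fm.
rewrite mdegD mdeg1 (dhomog_mf fd fm) mdeg_cover_mnm add1n.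
by apply: leq_trans; apply/alpha0_le/minsetp.
Qed.

Lemma GJ_edge_of_vnumber : is_vnumber J (alpha0 e - 1) -> exists C D, GJ_edge e C D.
Proof.
case=> /vwitness_edge [a [b [f [ab f0 fd Ja Jb]]]] _.
set m := mlead f; have fm : m \in msupp f := mlead_supp f0.
have /existsP [C /andP [minC Cam]] := cover_dvd_mulX Ja fm.
have /existsP [D /andP [minD /mnm_lepP Dbm]] := cover_dvd_mulX Jb fm.
(* By degree, the cover dividing t_a t^m is exactly the support of t_a t^m. *)
have CE : cover_mnm C = (U_(a) + m)%MM.
  apply: lem_mdeg_eq Cam _; rewrite mdegD mdeg1 (dhomog_mf fd fm) mdeg_cover_mnm.
  by rewrite (card_minvcover hunm minC); have := alpha0_gt0 hedge; lia.
have CEx x : nat_of_bool (x \in C) = ((a == x) + m x)%N.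
  by rewrite -cover_mnmE CE mnmDE mnm1E.
have ba : (b == a) = false by apply/eqP => ba; move: ab; rewrite ba eirr.
have aD : a \notin D.
  apply/negP => aD; move: (Dbm a) (CEx a); rewrite cover_mnmE aD mnmDE mnm1E ba eqxx.
  by case: (a \in C) => /=; lia.
exists C, D; apply: (GJ_edge_of_subset hunm (j := b) minC minD).
  by apply/eqP => CD; move: (CEx a); rewrite CD (negbTE aD) eqxx.
apply/subsetP => x xD; rewrite !inE; case: (x =P b) => //= /eqP xb.
move: (Dbm x) (CEx x); rewrite cover_mnmE xD mnmDE mnm1E eq_sym (negbTE xb).
by case: (x \in C) => /=; lia.
Qed.

Section Swap.
Variables (C : {set 'I_s}) (k l : 'I_s).
Hypotheses (minC : minvcover e C) (minD : minvcover e ((C :\ k) :|: [set l]))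
  (kl : e k l) (lC : l \notin C).
Local Notation M := (cover_mnm (C :\ k)).

Lemma cover_dvd_swap m : cover_dvd e (M + m)%MM = ~~ avoids [set k; l] m.
Proof.
have Mk : M k = 0%N by rewrite cover_mnmE !inE eqxx.
have Ml : M l = 0%N by rewrite cover_mnmE !inE (negbTE lC) andbF.
apply/existsP/forall_inPn => [[C' /andP [minC' /cover_mnm_leP C'm]] | [i]].
  have [kC' | lC'] := vcoverP _ _ (minsetp minC') k l kl.
    by exists k; rewrite ?inE ?eqxx // -lt0n; have := C'm k kC'; rewrite mnmDE Mk.
  by exists l; rewrite ?inE ?eqxx ?orbT // -lt0n; have := C'm l lC'; rewrite mnmDE Ml.
rewrite !inE -lt0n => /orP [] /eqP -> mi.
  exists C; rewrite minC; apply/cover_mnm_leP => x xC; rewrite mnmDE cover_mnmE !inE xC andbT.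
  by case: (x =P k) => [-> | ] //=.
exists ((C :\ k) :|: [set l]); rewrite minD; apply/cover_mnm_leP => x.
by rewrite mnmDE cover_mnmE !inE => /orP [-> | /eqP ->] //; rewrite (negbTE lC) andbF.
Qed.

Lemma colon_Ic_swap : same_ideal (colon J 'X_[M]) (var_ideal [set k; l]).
Proof.
move=> p; rewrite /colon Ic_mulXP var_idealE; split=> [Jp m mkl | p0 m].
  apply/eqP; rewrite -[_ == 0]negbK -mcoeff_msupp.
  by apply: contraL mkl => /Jp; rewrite cover_dvd_swap.
by rewrite mcoeff_msupp cover_dvd_swap; apply: contra => /p0 ->.
Qed.

End Swap.

Lemma vnumber_of_GJ_edge : (exists C D, GJ_edge e C D) -> is_vnumber J (alpha0 e - 1).
Proof.
case=> C [D CD]; have /and4P [minC minD _ _] := CD.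
have [k [l [kl kC lC DE]]] := (GJ_edgeP esym eirr hunm minC minD).1 CD.
rewrite -{}DE in minD.
split=> [|d /vwitness_ge]; last by have := alpha0_gt0 hedge; lia.
exists 'X_[cover_mnm (C :\ k)]; split.
  rewrite dhomogX; apply/eqP; transitivity #|C :\ k|; first exact: mdeg_cover_mnm.
  by rewrite -(card_minvcover hunm minC) (cardsD1 k C) kC add1n subn1.
have colonE := colon_Ic_swap minC minD kl lC.
exists (var_ideal [set k; l]); split=> //; split; first exact: var_ideal_prime.
by exists 'X_[cover_mnm (C :\ k)].
Qed.

End VNumber.

Section LinearPresentation.
Variables (K : fieldType) (s : nat) (e : rel 'I_s).
Hypotheses (eirr : irreflexive e) (hunm : unmixed e) (hedge : exists k l, e k l).
Local Notation S := {mpoly K[s]}.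
Local Notation gs := (Ic_gens K e).

Lemma linear_syzygy_isolated i0 (L : 'I_(size gs) -> S) :
  (forall D, ~~ GJ_edge e (gen_cover i0) D) -> syzygy L -> linear_vec L -> L i0 = 0.
Proof.
(* Compare the coefficients of t^C t_j: another generator dividing this
   monomial would be adjacent to C. *)
move=> i0_iso L0 Llin; apply/mpolyP => m; rewrite mcoeff0.
have [/mdeg1P [j /eqP ->] | m1] := boolP (mdeg m == 1%N); last exact: dhomog_nemf_coeff.
have := congr1 (mcoeff (cover_mnm (gen_cover i0) + U_(j))%MM) L0.
rewrite mcoeff0 raddf_sum (bigD1 i0) //= big1 ?addr0 => [|i i_i0].
  by rewrite nth_Ic_gens mcoeffMX.
rewrite nth_Ic_gens mcoeffMX_le; case: ifP => // /cover_mnm_leP le_i.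
case/negP: (i0_iso (gen_cover i)); apply: (GJ_edge_of_subset hunm (j := j)).
- exact: gen_cover_min.
- exact: gen_cover_min.
- by apply: contra i_i0 => /eqP /gen_cover_inj ->.
apply/subsetP => x /le_i; rewrite mnmDE cover_mnmE mnm1E !inE eq_sym.
by case: (x == j); case: (x \in gen_cover i0).
Qed.

Lemma GJ_edge_of_linearly_presented C :
  linearly_presented gs -> minvcover e C -> exists D, GJ_edge e C D.
Proof.
move=> [_ lin_pres] minC; case: (pickP (GJ_edge e C)) => [D CD | C_iso]; first by exists D.
have [D minD DC] := minvcover_neq eirr C hedge.
have [iC iCE] := gen_coverP K minC; have [iD iDE] := gen_coverP K minD.
have iDC : iD != iC by apply: contra DC => /eqP iDC; rewrite -iDE -iCE iDC.
pose w i : S :=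
  if i == iC then 'X_[cover_mnm D] else if i == iD then - 'X_[cover_mnm C] else 0.
have w_syz : syzygy w.
  rewrite /syzygy (bigD1 iC) //= (bigD1 iD) //= big1 => [|i /andP [iNC iND]].
    by rewrite /w eqxx (negbTE iDC) eqxx !nth_Ic_gens iCE iDE addr0 mulNr mulrC subrr.
  by rewrite /w (negbTE iNC) (negbTE iND) mul0r.
have [n [h [L [Llin wE]]]] := lin_pres w w_syz.
have := congr1 (mcoeff (cover_mnm D)) (wE iC); rewrite /w eqxx mcoeffX eqxx big1 ?mcoeff0.
  by move/eqP; rewrite oner_eq0.
move=> k _; rewrite (linear_syzygy_isolated _ (Llin k).1 (Llin k).2) ?mulr0 // => D'.
by rewrite iCE C_iso.
Qed.

End LinearPresentation.

Local Close Scope ring_scope.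
Unset Implicit Arguments.

Theorem theorem3p5 (K : fieldType) (s : nat) (e : rel 'I_s)
  (esym : ssrbool.symmetric e) (eirr : irreflexive e)
  (hedge : exists k l, e k l)
  (hunm : unmixed e) :
  (* (a) *)
  (forall C D : {set 'I_s}, minvcover e C -> minvcover e D ->
     (GJ_edge e C D <->
      exists k l, [/\ e k l, k \in C, l \notin C & (C :\ k) :|: [set l] = D])) /\
  (forall C : {set 'I_s}, minvcover e C -> (exists D, GJ_edge e C D) -> exchange e C) /\
  (* (b) *)
  ((exists C D, GJ_edge e C D) <-> is_vnumber (Ic K e) (alpha0 e - 1)) /\
  (* (c) *)
  (linearly_presented (Ic_gens K e) ->
     (forall C, minvcover e C -> exchange e C) /\ is_vnumber (Ic K e) (alpha0 e - 1)).
Proof.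
have exchange_of_edge C : minvcover e C -> (exists D, GJ_edge e C D) -> exchange e C.
  by move=> minC [D CD]; exact: GJ_edge_exchange CD.
have vnumberP : (exists C D, GJ_edge e C D) <-> is_vnumber (Ic K e) (alpha0 e - 1).
  by split; [exact: vnumber_of_GJ_edge | exact: GJ_edge_of_vnumber].
split; first by move=> C D minC minD; exact: GJ_edgeP.
split=> //; split=> // lin_pres.
have edge_at C : minvcover e C -> exists D, GJ_edge e C D.
  exact: (GJ_edge_of_linearly_presented eirr hunm hedge lin_pres).
split; first by move=> C minC; exact/exchange_of_edge/edge_at.
have [C minC] := minvcover_exists e; have [D CD] := edge_at C minC.
by apply/vnumberP; exists C, D.
Qed.
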